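(* Let $(\mathcal{X},d)$ be a finite metric space with at least two points, $\mu\in\mathcal{M}_+(\mathcal{X})$ with $\mu(x)\in\{0,1\}$ for all $x$, $s_x\in(0,1]$ for $x\in\mathcal{X}$, and let $\hat\mu_{s_\mathcal{X}}$ be the Bernoulli-model estimator. Then for every $p\ge1$, $C>0$, $q>1$, $L\in\mathbb{N}$, $$\mathbb{E}\big[\mathrm{KR}_{p,C}(\hat\mu_{s_\mathcal{X}},\mu)\big]\le\mathcal{E}_{p,\mathcal{X}}(C,q,L)^{1/p}\cdot\begin{cases}\big(2\sum_{x\in\mathcal{X}}(1-s_x)\big)^{1/p}, & \text{if } C\le\max\{2h_{q,L}(L),\min_{x\ne x'}d(x,x')\},\\[0.5ex]\big(\sum_{x\in\mathcal{X}}\frac{1-s_x}{s_x}\big)^{1/(2p)}, & \text{otherwise.}\end{cases}$$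
   Context: $\mathrm{KR}_{p,C}(\mu,\nu)=\big(\min_{\pi\in\Pi_\le(\mu,\nu)}\sum_{x,x'}d^p(x,x')\pi(x,x')+C^p(\frac{\mathbb{M}(\mu)+\mathbb{M}(\nu)}2-\mathbb{M}(\pi))\big)^{1/p}$, $\Pi_\le(\mu,\nu)$ the non-negative $\pi$ with row sums $\le\mu$ and column sums $\le\nu$, $\mathbb{M}$ total mass. Bernoulli model: independent $B_x\sim\mathrm{Ber}(s_x)$, $\hat\mu_{s_\mathcal{X}}=\sum_{x\in\mathrm{supp}(\mu)}\frac{B_x}{s_x}\delta_x$. $h_{q,L}(k)=\frac{q^{1-k}-q^{-L}}{q-1}\mathrm{diam}(\mathcal{X})$; $Q_j$ ($j=0..L$) a minimal-cardinality $q^{-j}\mathrm{diam}(\mathcal{X})$-cover of $\mathcal{X}$ by points of $\mathcal{X}$; $A_{q,p,L,\mathcal{X}}(l)=\mathrm{diam}(\mathcal{X})^p2^{p-1}(q^{-Lp}|\mathcal{X}|^{1/2}+(\frac q{q-1})^p\sum_{j=l}^Lq^{p-jp}|Q_j|^{1/2})$. The constant (same as in the Poisson model): $\mathcal{E}_{p,\mathcal{X}}(C,q,L)=\frac{C^p}2$ if $C\le\max\{2h_{q,L}(L),\min_{x\ne x'}d(x,x')\}$; otherwise $(\frac{C^p}2-2^{p-1}h_{q,L}(0)^p)+A_{q,p,L,\mathcal{X}}(1)$ if $C\ge2h_{q,L}(0)$; otherwise $A_{q,p,L,\mathcal{X}}(l)$ for the $l\in\{1,\dots,L\}$ with $2h_{q,L}(l)\le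 C<2h_{q,L}(l-1)$. *)

From HB Require Import structures.
From mathcomp Require Import all_boot all_order all_algebra.
From mathcomp Require Import classical_sets reals exp.
Set Implicit Arguments. Unset Strict Implicit. Unset Printing Implicit Defensive.
Import Order.TTheory GRing.Theory Num.Theory.
Local Open Scope ring_scope.
Local Open Scope classical_set_scope.

Section KRDefs.
Variables (R : realType) (T : finType).

Definition is_metric (d : T -> T -> R) : Prop :=
  [/\ forall x y, 0 <= d x y,
      forall x y, d x y = 0 <-> x = y,
      forall x y, d x y = d y x &
      forall x y z, d x z <= d x y + d y z].

Definition mass (mu : T -> R) : R := \sum_(x : T) mu x.

Definition subcoupling (mu nu : T -> R) (pi : T -> T -> R) : Prop :=
  [/\ forall x x', 0 <= pi x x',
      forall x, \sum_(x' : T) pi x x' <= mu x &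
      forall x', \sum_(x : T) pi x x' <= nu x'].

Definition plan_mass (pi : T -> T -> R) : R := \sum_(x : T) \sum_(x' : T) pi x x'.

Definition KR_cost (d : T -> T -> R) (p C : R) (mu nu : T -> R)
  (pi : T -> T -> R) : R :=
  \sum_(x : T) \sum_(x' : T) powR (d x x') p * pi x x'
  + powR C p * ((mass mu + mass nu) / 2 - plan_mass pi).

(* KR_{p,C}(mu,nu); the minimum over the compact polytope Pi_<= is written as
   an infimum (it is attained). *)
Definition KR (d : T -> T -> R) (p C : R) (mu nu : T -> R) : R :=
  powR (inf [set c | exists pi, subcoupling mu nu pi /\ c = KR_cost d p C mu nu pi])
       p^-1.

Definition bern_est (s : T -> R) (mu : T -> R) (b : {ffun T -> bool}) : T -> R :=
  fun x => if mu x != 0 then (b x)%:R / s x else 0.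

Definition bern_prob (s : T -> R) (b : {ffun T -> bool}) : R :=
  \prod_(x : T) (if b x then s x else 1 - s x).

Definition expected_KR (d : T -> T -> R) (p C : R) (s mu : T -> R) : R :=
  \sum_(b : {ffun T -> bool}) bern_prob s b * KR d p C (bern_est s mu b) mu.

Definition diam (d : T -> T -> R) : R :=
  \big[Num.max/0]_(x : T) \big[Num.max/0]_(y : T) d x y.

(* min_{x <> x'} d(x, x') (the default value diam is never reached when
   |T| >= 2, since every distance is <= diam) *)
Definition min_dist (d : T -> T -> R) : R :=
  \big[Num.min/diam d]_(x : T) \big[Num.min/diam d]_(y : T | y != x) d x y.

Definition hqL (d : T -> T -> R) (q : R) (L k : nat) : R :=
  (powR q (1 - k%:R) - powR q (- L%:R)) / (q - 1) * diam d.

Definition is_cover (d : T -> T -> R) (r : R) (Q : {set T}) : bool :=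
  [forall x : T, [exists y in Q, d x y <= r]].

Definition cover_num (d : T -> T -> R) (r : R) : nat :=
  \big[minn/#|T|]_(Q : {set T} | is_cover d r Q) #|Q|.

Definition Qcard (d : T -> T -> R) (q : R) (j : nat) : nat :=
  cover_num d (powR q (- j%:R) * diam d).

Definition Aconst (d : T -> T -> R) (q p : R) (L l : nat) : R :=
  powR (diam d) p * powR 2 (p - 1) *
  (powR q (- L%:R * p) * Num.sqrt (#|T|%:R)
   + powR (q / (q - 1)) p *
     \sum_(l <= j < L.+1) powR q (p - j%:R * p) * Num.sqrt ((Qcard d q j)%:R)).

(* E_{p,X}(C,q,L).  In the last case the l in {1..L} with
   2h(l) <= C < 2h(l-1) is unique, so the value A(l) is written as the sum of
   A(l) over the l in {1..L} satisfying that condition. *)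
Definition Econst (d : T -> T -> R) (p C q : R) (L : nat) : R :=
  if C <= Num.max (2 * hqL d q L L) (min_dist d) then powR C p / 2
  else if 2 * hqL d q L 0 <= C then
    (powR C p / 2 - powR 2 (p - 1) * powR (hqL d q L 0) p) + Aconst d q p L 1
  else \sum_(1 <= l < L.+1 | (2 * hqL d q L l <= C) && (C < 2 * hqL d q L l.-1))
         Aconst d q p L l.

End KRDefs.

From HB Require Import structures.
From mathcomp Require Import all_boot all_order all_algebra.
From mathcomp Require Import classical_sets reals exp.
From mathcomp Require Import ring lra zify.
Set Implicit Arguments. Unset Strict Implicit. Unset Printing Implicit Defensive.
Import Order.TTheory GRing.Theory Num.Theory.
Local Open Scope ring_scope.

(* An upper bound on KR comes from any sub-coupling, so it suffices to build a
   cheap one for each realisation of the Bernoulli variables.  Take covers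
   Q_j of radius q^-j diam and project every point successively on
   Q_L, ..., Q_0; this gives a chain of coarsening partitions.  Matching mass
   greedily up the chain, level j is matched inside its clusters at price at
   most (2 h(j))^p per unit, and the mass left unmatched there is half of the
   cluster imbalance sum_c |(hat mu - mu)(cluster c)|; the mass left over at
   the level where 2 h(j) would exceed C is paid for at price C^p instead.
   Each imbalance is a sum of independent centred errors of variance at most
   (1 - s_x)/s_x, so by Cauchy-Schwarz a partition into k clusters has
   expected imbalance at most sqrt(k * sum_x (1 - s_x)/s_x), while without
   any matching the expected imbalance is at most 2 sum_x (1 - s_x).  Finally
   concavity of t |-> t^(1/p) moves the expectation inside the root. *)

Section OrderedFieldFacts.
Variable R : realFieldType.

Lemma max0_addN (z : R) : Num.max z 0 + Num.max (- z) 0 = `|z|.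
Proof.
have [z0|z0] := lerP 0 z; [rewrite ger0_norm // | rewrite ltr0_norm //];
  by case: (leP z 0); case: (leP (- z) 0) => *; lra.
Qed.

Lemma subr_min (u v : R) : u - Num.min u v = Num.max (u - v) 0.
Proof. by case: (leP u v) => h; case: (leP (u - v) 0) => h'; lra. Qed.

Lemma min_half (u v : R) : Num.min u v = (u + v - `|u - v|) / 2.
Proof.
by case: (leP u v) => h; [rewrite ler0_norm ?subr_le0 | rewrite gtr0_norm ?subr_gt0];
  lra.
Qed.

Lemma mulr_div_max (u v : R) : 0 <= u -> 0 <= v -> u * v / Num.max u v = Num.min u v.
Proof.
move=> u0 v0; case: (leP u v) => uv; last first.
  by rewrite mulrAC divff ?mul1r // gt_eqF // (le_lt_trans v0 uv).
have [v_eq0|v_neq0] := eqVneq v 0; last by rewrite mulfK.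
rewrite v_eq0 in uv *; have -> : u = 0 by apply/le_anti; rewrite uv u0.
by rewrite !mul0r; case: (leP (0 : R) 0).
Qed.

Lemma divr_max_le1 (u v : R) : 0 <= u -> 0 <= v -> u / Num.max u v <= 1.
Proof.
move=> u0 v0; have [->|M_neq0] := eqVneq (Num.max u v) 0; first by rewrite invr0 mulr0.
rewrite ler_pdivrMr ?mul1r ?le_max ?lexx //.
by rewrite lt_def M_neq0 le_max u0.
Qed.

Lemma wsum_CauchySchwarz (I : finType) (P u : I -> R) :
  (forall i, 0 <= P i) ->
  (\sum_i P i * u i) ^+ 2 <= (\sum_i P i) * (\sum_i P i * u i ^+ 2).
Proof.
move=> P_ge0; set S0 := \sum_i P i; set S1 := \sum_i P i * u i.
set S2 := \sum_i P i * u i ^+ 2.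
have quad_ge0 t : 0 <= S2 - 2 * t * S1 + t ^+ 2 * S0.
  have -> : S2 - 2 * t * S1 + t ^+ 2 * S0 = \sum_i P i * (u i - t) ^+ 2.
    rewrite /S2 /S1 /S0 mulr_sumr mulr_sumr -sumrB -big_split /=.
    by apply: eq_bigr => i _; ring.
  by apply: sumr_ge0 => i _; rewrite mulr_ge0 ?sqr_ge0.
have [S0_eq0|S0_neq0] := eqVneq S0 0.
  have P_eq0 i : P i = 0 by apply: (psumr_eq0P (fun i _ => P_ge0 i) S0_eq0).
  by rewrite S0_eq0 mul0r /S1 big1 ?expr0n // => i _; rewrite P_eq0 mul0r.
have S0_gt0 : 0 < S0 by rewrite lt_def S0_neq0 sumr_ge0.
have := quad_ge0 (S1 / S0).
have -> : S2 - 2 * (S1 / S0) * S1 + (S1 / S0) ^+ 2 * S0 = (S0 * S2 - S1 ^+ 2) / S0.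
  by field.
by rewrite pmulr_lge0 ?invr_gt0 // subr_ge0.
Qed.

Lemma exists_crossing (f : nat -> R) (c : R) (L : nat) :
  f L <= c -> c < f 0%N -> exists2 l, (0 < l <= L)%N & f l <= c < f l.-1.
Proof.
move=> fL_le c_lt; have ex_le : exists n, f n <= c by exists L.
case: (ex_minnP ex_le) => l fl_le l_min.
have l_gt0 : (0 < l)%N by rewrite lt0n; apply: contraTneq fl_le => ->; rewrite -ltNge.
exists l; first by rewrite l_gt0 l_min.
by rewrite fl_le /= ltNge; apply/negP => /l_min; lia.
Qed.

Lemma ler_sum_nat_term (P : pred nat) (f : nat -> R) m n i :
  (m <= i < n)%N -> P i -> (forall j, 0 <= f j) -> f i <= \sum_(m <= j < n | P j) f j.
Proof.
move=> i_in Pi f_ge0; rewrite big_mkcond (bigD1_seq i) /=; first last.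
- by rewrite /index_iota iota_uniq.
- by rewrite mem_index_iota.
by rewrite Pi lerDl sumr_ge0 // => j _; case: ifP.
Qed.

Lemma sumr_weighted_increments_le (w g : nat -> R) m n : (m < n)%N ->
  (forall j, 0 <= w j) -> (forall j, 0 <= g j) ->
  \sum_(m <= j < n) w j * ((g j.+1 - g j) / 2) <=
  \sum_(m <= j < n) w j / 2 * g j.+1 - w m / 2 * g m.
Proof.
move=> lt_mn w_ge0 g_ge0.
have -> : \sum_(m <= j < n) w j * ((g j.+1 - g j) / 2) =
          \sum_(m <= j < n) w j / 2 * g j.+1 - \sum_(m <= j < n) w j / 2 * g j.
  by rewrite -sumrB; apply: eq_bigr => j _; ring.
by rewrite lerD2l lerN2 big_ltn // lerDl sumr_ge0 // => j _; rewrite mulr_ge0 ?divr_ge0.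
Qed.
End OrderedFieldFacts.

Section PowerFacts.
Variable R : realType.

(* Concavity of [t |-> t ^ (1/p)]: the curve lies below its tangent at [K]
   (Young's inequality with the exponents [p] and [p / (p - 1)]). *)
Lemma powR_inv_le_tangent (p x K : R) : 1 <= p -> 0 <= x -> 0 < K ->
  powR x p^-1 <= powR K p^-1 * (x / (p * K) + (1 - p^-1)).
Proof.
move=> p_ge1 x_ge0 K_gt0; have p_gt0 : 0 < p by apply: lt_le_trans p_ge1.
have [p_eq1|p_neq1] := eqVneq p 1.
  by rewrite p_eq1 invr1 !powRr1 ?(ltW K_gt0) // subrr addr0 mul1r mulrCA divff ?mulr1 ?gt_eqF.
have p_gt1 : 1 < p by rewrite lt_neqAle eq_sym p_neq1.
set a := powR (x / K) p^-1.
have a_ge0 : 0 <= a by apply: powR_ge0.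
set p' := (1 - p^-1)^-1.
have p'_gt0 : 0 < p' by rewrite invr_gt0 subr_gt0 invf_lt1.
have conj : p^-1 + p'^-1 = 1 by rewrite /p' invrK addrC subrK.
have := conjugate_powR a_ge0 ler01 p_gt0 p'_gt0 conj.
have -> : powR a p = x / K.
  by rewrite /a -powRrM mulVf ?gt_eqF // powRr1 // divr_ge0 // ltW.
rewrite mulr1 powR1 /p' invrK => young.
have -> : powR x p^-1 = powR K p^-1 * a.
  by rewrite /a -powRM ?(ltW K_gt0) ?divr_ge0 ?(ltW K_gt0) // mulrC divfK // gt_eqF.
rewrite ler_wpM2l ?powR_ge0 //; apply: (le_trans young).
by rewrite mul1r invfM mulrA mulrAC.
Qed.

Lemma powR_double_half (p h : R) : 0 <= h ->
  powR (2 * h) p / 2 = powR 2 (p - 1) * powR h p.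
Proof.
move=> h_ge0; have two_neq0 : (2 : R) != 0 by rewrite pnatr_eq0.
by rewrite powRM // powRB ?two_neq0 ?implybT // powRr1 // mulrAC.
Qed.

Lemma powR_mul_sqrt (E V p : R) : 0 <= E -> 0 <= V ->
  powR (E * Num.sqrt V) p^-1 = powR E p^-1 * powR V (2 * p)^-1.
Proof.
move=> E_ge0 V_ge0; rewrite powRM ?sqrtr_ge0 //; congr (_ * _).
by rewrite -powR12_sqrt // -powRrM invfM.
Qed.
End PowerFacts.

Section ClusterPlans.
Variables (R : realType) (T : finType).
Implicit Types (a b : T -> R) (pi : T -> T -> R) (F G : T -> T).

Definition cluster_mass F a (c : T) : R := \sum_(x | F x == c) a x.
Definition cluster_gap F a b : R :=
  \sum_c `|cluster_mass F a c - cluster_mass F b c|.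
Definition row_sum pi x : R := \sum_y pi x y.
Definition col_sum pi y : R := \sum_x pi x y.
Definition transport_cost (d : T -> T -> R) p pi : R :=
  \sum_x \sum_y powR (d x y) p * pi x y.

Lemma sum_cluster_mass F a : \sum_c cluster_mass F a c = \sum_x a x.
Proof. by rewrite [RHS](partition_big F xpredT). Qed.

Lemma cluster_massB F a b c :
  cluster_mass F (fun x => a x - b x) c = cluster_mass F a c - cluster_mass F b c.
Proof. by rewrite /cluster_mass sumrB. Qed.

Lemma eq_cluster_mass F G : F =1 G -> forall a, cluster_mass F a =1 cluster_mass G a.
Proof. by move=> FG a c; apply: eq_bigl => x; rewrite FG. Qed.

(* Invariant of the greedy matching along a chain of coarsening partitions:
   [pi] only moves mass inside the clusters of [F] and leaves, in each
   cluster, exactly the surplus of one side over the other. *)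
Definition cluster_plan (d : T -> T -> R) p a b F B pi :=
  [/\ subcoupling a b pi, (forall x y, F x != F y -> pi x y = 0),
      (forall c, cluster_mass F (fun x => a x - row_sum pi x) c =
                 Num.max (cluster_mass F a c - cluster_mass F b c) 0),
      (forall c, cluster_mass F (fun y => b y - col_sum pi y) c =
                 Num.max (cluster_mass F b c - cluster_mass F a c) 0) &
      transport_cost d p pi <= B].

Lemma eq_cluster_plan d p a b F G B pi :
  F =1 G -> cluster_plan d p a b F B pi -> cluster_plan d p a b G B pi.
Proof.
move=> FG [spi supp rows cols cost]; split => //.
- by move=> x y; rewrite -!FG; apply: supp.
- by move=> c; rewrite -!(eq_cluster_mass FG).
- by move=> c; rewrite -!(eq_cluster_mass FG).
Qed.

Lemma cluster_plan_leftover d p a b F B pi : cluster_plan d p a b F B pi ->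
  \sum_x (a x - row_sum pi x) + \sum_y (b y - col_sum pi y) = cluster_gap F a b.
Proof.
case=> _ _ rows cols _.
rewrite -(sum_cluster_mass F (fun x => a x - row_sum pi x)).
rewrite -(sum_cluster_mass F (fun y => b y - col_sum pi y)).
rewrite -big_split /=.
apply: eq_bigr => c _; rewrite rows cols -[cluster_mass F b c - _]opprB.
exact: max0_addN.
Qed.

Lemma diagonal_cluster_plan d p a b : 0 < p -> (forall x, d x x = 0) ->
  (forall x, 0 <= a x) -> (forall x, 0 <= b x) -> exists pi, cluster_plan d p a b id 0 pi.
Proof.
move=> p_gt0 dxx a_ge0 b_ge0.
pose pi x y := if x == y then Num.min (a x) (b x) else 0.
have row_pi x : row_sum pi x = Num.min (a x) (b x).
  rewrite /row_sum (bigD1 x) //= /pi eqxx big1 ?addr0 // => y.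
  by rewrite eq_sym => /negbTE ->.
have col_pi y : col_sum pi y = Num.min (a y) (b y).
  by rewrite /col_sum (bigD1 y) //= /pi eqxx big1 ?addr0 // => x /negbTE ->.
have mass_id f c : cluster_mass id f c = f c by rewrite /cluster_mass big_pred1_eq.
exists pi; split.
- split => [x y|x|y].
  + by rewrite /pi; case: ifP => // _; rewrite le_min a_ge0 b_ge0.
  + by have := row_pi x; rewrite /row_sum => ->; rewrite ge_min lexx.
  + by have := col_pi y; rewrite /col_sum => ->; rewrite ge_min lexx orbT.
- by move=> x y /= /negbTE; rewrite /pi => ->.
- by move=> c; rewrite !mass_id row_pi subr_min.
- by move=> c; rewrite !mass_id col_pi minC subr_min.
- rewrite /transport_cost big1 // => x _; rewrite big1 // => y _; rewrite /pi.
  case: eqP => [->|_]; last by rewrite mulr0.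
  by rewrite dxx powR0 ?mul0r // gt_eqF.
Qed.

Section ProportionalPlan.
Variables (G : T -> T) (a b : T -> R).
Hypotheses (a_ge0 : forall x, 0 <= a x) (b_ge0 : forall y, 0 <= b y).

Let A := cluster_mass G a.
Let B := cluster_mass G b.
Let M c := Num.max (A c) (B c).

(* Inside each cluster, match [a] against [b] proportionally: this saturates
   the smaller of the two cluster masses. *)
Definition proportional_plan x y : R :=
  if G x == G y then a x * b y / M (G x) else 0.

Let A_ge0 c : 0 <= A c. Proof. exact: sumr_ge0. Qed.
Let B_ge0 c : 0 <= B c. Proof. exact: sumr_ge0. Qed.

Lemma proportional_plan_ge0 x y : 0 <= proportional_plan x y.
Proof.
rewrite /proportional_plan; case: ifP => // _.
by rewrite divr_ge0 ?mulr_ge0 // le_max A_ge0.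
Qed.

Lemma row_sum_proportional x : row_sum proportional_plan x = a x * (B (G x) / M (G x)).
Proof.
have -> : row_sum proportional_plan x = \sum_(y | G y == G x) a x / M (G x) * b y.
  rewrite /row_sum [RHS]big_mkcond; apply: eq_bigr => y _ /=.
  by rewrite /proportional_plan eq_sym; case: ifP => // _; rewrite mulrAC.
by rewrite -mulr_sumr mulrAC mulrA.
Qed.

Lemma col_sum_proportional y : col_sum proportional_plan y = A (G y) * (b y / M (G y)).
Proof.
have -> : col_sum proportional_plan y = \sum_(x | G x == G y) a x * (b y / M (G y)).
  rewrite /col_sum [RHS]big_mkcond; apply: eq_bigr => x _ /=.
  by rewrite /proportional_plan; case: eqP => // ->; rewrite mulrA.
by rewrite -mulr_suml.
Qed.

Lemma row_sum_proportional_le x : row_sum proportional_plan x <= a x.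
Proof.
rewrite row_sum_proportional -[leRHS]mulr1 ler_wpM2l // /M maxC.
exact: divr_max_le1.
Qed.

Lemma col_sum_proportional_le y : col_sum proportional_plan y <= b y.
Proof.
rewrite col_sum_proportional mulrCA -[leRHS]mulr1 ler_wpM2l //.
exact: divr_max_le1.
Qed.

Lemma cluster_row_sum_proportional c :
  cluster_mass G (row_sum proportional_plan) c = Num.min (A c) (B c).
Proof.
rewrite -mulr_div_max // /cluster_mass.
under eq_bigr => x /eqP Gx do rewrite row_sum_proportional Gx.
by rewrite -mulr_suml mulrA.
Qed.

Lemma cluster_col_sum_proportional c :
  cluster_mass G (col_sum proportional_plan) c = Num.min (A c) (B c).
Proof.
rewrite -mulr_div_max // /cluster_mass.
under eq_bigr => y /eqP Gy do rewrite col_sum_proportional Gy.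
by rewrite -mulr_sumr -mulr_suml mulrA.
Qed.
End ProportionalPlan.

Lemma cluster_mass_row_col_sum G pi : (forall x y, G x != G y -> pi x y = 0) ->
  cluster_mass G (row_sum pi) =1 cluster_mass G (col_sum pi).
Proof.
move=> supp c.
have -> : cluster_mass G (row_sum pi) c = \sum_(x | G x == c) \sum_(y | G y == c) pi x y.
  apply: eq_bigr => x /eqP Gx; rewrite /row_sum [RHS]big_mkcond; apply: eq_bigr => y _.
  by case: ifP => // /negbT Gy; apply: supp; rewrite Gx eq_sym.
have -> : cluster_mass G (col_sum pi) c = \sum_(y | G y == c) \sum_(x | G x == c) pi x y.
  apply: eq_bigr => y /eqP Gy; rewrite /col_sum [RHS]big_mkcond; apply: eq_bigr => x _.
  by case: ifP => // /negbT Gx; apply: supp; rewrite Gy.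
exact: exchange_big.
Qed.

Lemma transport_costD d p pi rho :
  transport_cost d p (fun x y => pi x y + rho x y) =
  transport_cost d p pi + transport_cost d p rho.
Proof.
rewrite /transport_cost -big_split; apply: eq_bigr => x _.
by rewrite -big_split; apply: eq_bigr => y _; rewrite mulrDr.
Qed.

Lemma transport_cost_le_cluster d p G w rho :
  (forall x y, 0 <= rho x y) -> (forall x y, G x != G y -> rho x y = 0) ->
  (forall x y, G x = G y -> powR (d x y) p <= w) ->
  transport_cost d p rho <= w * \sum_x row_sum rho x.
Proof.
move=> rho_ge0 supp w_bound; rewrite mulr_sumr; apply: ler_sum => x _.
rewrite /row_sum mulr_sumr; apply: ler_sum => y _.
have [/eqP Gxy|Gxy] := boolP (G x == G y); first by rewrite ler_wpM2r ?w_bound.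
by rewrite supp // !mulr0.
Qed.

Lemma coarsen_cluster_plan d p a b F G B pi w :
  (forall x y, F x = F y -> G x = G y) ->
  (forall x y, G x = G y -> powR (d x y) p <= w) -> 0 <= w ->
  cluster_plan d p a b F B pi ->
  exists pi', cluster_plan d p a b G
    (B + w * ((cluster_gap F a b - cluster_gap G a b) / 2)) pi'.
Proof.
move=> refine w_bound w_ge0 piF; have [[pi_ge0 rows_le cols_le] suppF _ _ cost] := piF.
have suppG x y : G x != G y -> pi x y = 0.
  by move=> Gxy; apply: suppF; apply: contra Gxy => /eqP /refine ->.
pose a' x := a x - row_sum pi x; pose b' y := b y - col_sum pi y.
have a'_ge0 x : 0 <= a' x by rewrite /a' subr_ge0; apply: rows_le.
have b'_ge0 y : 0 <= b' y by rewrite /b' subr_ge0; apply: cols_le.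
pose rho := proportional_plan G a' b'.
have rho_ge0 x y : 0 <= rho x y by apply: proportional_plan_ge0.
have imbalance c : cluster_mass G a' c - cluster_mass G b' c =
                   cluster_mass G a c - cluster_mass G b c.
  by rewrite !cluster_massB (cluster_mass_row_col_sum suppG); lra.
have rho_mass : \sum_x row_sum rho x = (cluster_gap F a b - cluster_gap G a b) / 2.
  rewrite -(sum_cluster_mass G).
  under eq_bigr => c _ do rewrite cluster_row_sum_proportional // min_half.
  rewrite -mulr_suml sumrB big_split /= !sum_cluster_mass (cluster_plan_leftover piF).
  by congr ((_ - _) / 2); apply: eq_bigr => c _; rewrite imbalance.
have rho_supp x y : G x != G y -> rho x y = 0.
  by move=> Gxy; rewrite /rho /proportional_plan (negbTE Gxy).
exists (fun x y => pi x y + rho x y); split.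
- split => [x y|x|y]; first exact: addr_ge0.
  + have := row_sum_proportional_le G a'_ge0 b'_ge0 x.
    by rewrite /row_sum big_split /= /a' /row_sum; lra.
  + have := col_sum_proportional_le G a'_ge0 b'_ge0 y.
    by rewrite /col_sum big_split /= /b' /col_sum; lra.
- by move=> x y Gxy; rewrite suppG // rho_supp // addr0.
- move=> c; have -> : cluster_mass G (fun x => a x - row_sum (fun x y => pi x y + rho x y) x) c
                     = cluster_mass G a' c - cluster_mass G (row_sum rho) c.
    by rewrite -cluster_massB; apply: eq_bigr => x _; rewrite /a' /row_sum big_split /=; lra.
  by rewrite cluster_row_sum_proportional // subr_min imbalance.
- move=> c; have -> : cluster_mass G (fun y => b y - col_sum (fun x y => pi x y + rho x y) y) c
                     = cluster_mass G b' c - cluster_mass G (col_sum rho) c.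
    by rewrite -cluster_massB; apply: eq_bigr => y _; rewrite /b' /col_sum big_split /=; lra.
  by rewrite cluster_col_sum_proportional // minC subr_min -opprB imbalance opprB.
- rewrite transport_costD -rho_mass lerD //.
  exact: transport_cost_le_cluster rho_ge0 rho_supp w_bound.
Qed.

Lemma chain_cluster_plan d p a b (F : nat -> T -> T) (w : nat -> R) N :
  0 < p -> (forall x, d x x = 0) -> (forall x, 0 <= a x) -> (forall y, 0 <= b y) ->
  F N =1 id ->
  (forall j x y, (j < N)%N -> F j.+1 x = F j.+1 y -> F j x = F j y) ->
  (forall j x y, (j < N)%N -> F j x = F j y -> powR (d x y) p <= w j) ->
  (forall j, 0 <= w j) ->
  forall m, (m <= N)%N -> exists pi, cluster_plan d p a b (F m)
    (\sum_(m <= j < N) w j * ((cluster_gap (F j.+1) a b - cluster_gap (F j) a b) / 2)) pi.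
Proof.
move=> p_gt0 dxx a_ge0 b_ge0 FN refine w_bound w_ge0 m le_mN.
rewrite -(subKn le_mN); elim: (N - m)%N (leq_subr m N) => [_|k IHk lt_kN].
  have [pi piN] := diagonal_cluster_plan p_gt0 dxx a_ge0 b_ge0.
  by exists pi; rewrite subn0 big_geq //; apply: eq_cluster_plan piN => x; rewrite FN.
have [pi pi_k] := IHk (ltnW lt_kN).
have lt_N : (N - k.+1 < N)%N by lia.
have e : (N - k = (N - k.+1).+1)%N by lia.
rewrite e in pi_k.
have [pi' pi'_k] := coarsen_cluster_plan (fun x y => refine _ x y lt_N)
  (fun x y => w_bound _ x y lt_N) (w_ge0 _) pi_k.
by exists pi'; rewrite big_ltn // addrC.
Qed.

Lemma KR_cost_cluster_plan d p C a b F B pi : cluster_plan d p a b F B pi ->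
  KR_cost d p C a b pi <= B + powR C p * (cluster_gap F a b / 2).
Proof.
move=> piF; have [_ _ _ _ cost] := piF.
have mass_gap : (mass a + mass b) / 2 - plan_mass pi = cluster_gap F a b / 2.
  have := cluster_plan_leftover piF; rewrite !sumrB /col_sum.
  rewrite [X in _ + (_ - X) = _]exchange_big.
  by rewrite /mass /plan_mass /row_sum; lra.
by rewrite /KR_cost mass_gap lerD2r.
Qed.

Lemma KR_cost_ge0 d p C a b pi : 0 <= C -> subcoupling a b pi -> 0 <= KR_cost d p C a b pi.
Proof.
move=> C_ge0 [pi_ge0 rows_le cols_le]; rewrite /KR_cost addr_ge0 //.
  by do 2![apply: sumr_ge0 => ? _]; rewrite mulr_ge0 ?powR_ge0.
rewrite mulr_ge0 ?powR_ge0 // subr_ge0 ler_pdivlMr //.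
have : plan_mass pi <= mass a by apply: ler_sum => x _; apply: rows_le.
have : plan_mass pi <= mass b.
  by rewrite /plan_mass exchange_big; apply: ler_sum => y _; apply: cols_le.
lra.
Qed.

Lemma KR_le_cost d p C a b pi : 0 < p -> 0 <= C -> subcoupling a b pi ->
  KR d p C a b <= powR (KR_cost d p C a b pi) p^-1.
Proof.
move=> p_gt0 C_ge0 spi; rewrite /KR; set S := (X in inf X).
have S_cost : S (KR_cost d p C a b pi) by exists pi.
have S_lb : lbound S 0 by move=> c [pi' [spi' ->]]; exact: KR_cost_ge0.
apply: ge0_ler_powR; rewrite ?nnegrE ?invr_ge0 ?(ltW p_gt0) ?KR_cost_ge0 //.
  by apply: lb_le_inf => //; exists (KR_cost d p C a b pi).
by apply: ge_inf => //; exists 0.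
Qed.
End ClusterPlans.

Section BernoulliExpectation.
Variables (R : realType) (T : finType) (s : T -> R).
Hypothesis s_01 : forall x, 0 <= s x <= 1.
Implicit Types X Y : {ffun T -> bool} -> R.

Definition bern_expect X : R := \sum_b bern_prob s b * X b.

Lemma bern_prob_ge0 b : 0 <= bern_prob s b.
Proof. by apply: prodr_ge0 => x _; have := s_01 x; case: (b x) => /andP[]; lra. Qed.

Lemma eq_bern_expect X Y : X =1 Y -> bern_expect X = bern_expect Y.
Proof. by move=> XY; apply: eq_bigr => b _; rewrite XY. Qed.

Lemma ler_bern_expect X Y : (forall b, X b <= Y b) -> bern_expect X <= bern_expect Y.
Proof. by move=> XY; apply: ler_sum => b _; rewrite ler_wpM2l ?bern_prob_ge0. Qed.

Lemma bern_expect_ge0 X : (forall b, 0 <= X b) -> 0 <= bern_expect X.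
Proof. by move=> X_ge0; apply: sumr_ge0 => b _; rewrite mulr_ge0 ?bern_prob_ge0. Qed.

Lemma bern_expectD X Y : bern_expect (fun b => X b + Y b) = bern_expect X + bern_expect Y.
Proof. by rewrite /bern_expect -big_split; apply: eq_bigr => b _; rewrite mulrDr. Qed.

Lemma bern_expectZ c X : bern_expect (fun b => c * X b) = c * bern_expect X.
Proof. by rewrite /bern_expect mulr_sumr; apply: eq_bigr => b _; rewrite mulrCA. Qed.

Lemma bern_expect_sum (I : Type) (r : seq I) (P : pred I) (X : I -> {ffun T -> bool} -> R) :
  bern_expect (fun b => \sum_(i <- r | P i) X i b) = \sum_(i <- r | P i) bern_expect (X i).
Proof. by rewrite /bern_expect; under eq_bigr do rewrite mulr_sumr; rewrite exchange_big. Qed.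

Lemma bern_expect_prod (phi : T -> bool -> R) :
  bern_expect (fun b => \prod_x phi x (b x)) =
  \prod_x (s x * phi x true + (1 - s x) * phi x false).
Proof.
have -> : \prod_x (s x * phi x true + (1 - s x) * phi x false) =
          \prod_x \sum_(bt : bool) (if bt then s x else 1 - s x) * phi x bt.
  by apply: eq_bigr => x _; rewrite big_bool.
rewrite bigA_distr_bigA /bern_expect /bern_prob; apply: eq_bigr => b _.
by rewrite big_split.
Qed.

Lemma bern_expect_cst c : bern_expect (fun _ => c) = c.
Proof.
transitivity (c * bern_expect (fun b => \prod_(x : T) (1 : R))).
  by rewrite -bern_expectZ; apply: eq_bern_expect => b; rewrite big1 ?mulr1.
by rewrite (bern_expect_prod (fun _ _ => 1)) big1 ?mulr1 // => x _; rewrite !mulr1 subrKC.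
Qed.

Lemma bern_prob_sum1 : \sum_b bern_prob s b = 1.
Proof. by rewrite -[RHS](bern_expect_cst 1); apply: eq_bigr => b _; rewrite mulr1. Qed.

Lemma bern_expect_coord x (f : bool -> R) :
  bern_expect (fun b => f (b x)) = s x * f true + (1 - s x) * f false.
Proof.
pose phi z bt := if z == x then f bt else 1.
have phi_prod b : \prod_z phi z (b z) = f (b x).
  by rewrite (bigD1 x) //= /phi eqxx big1 ?mulr1 // => z /negbTE ->.
rewrite -(eq_bern_expect phi_prod) bern_expect_prod (bigD1 x) //= /phi eqxx.
by rewrite big1 ?mulr1 // => z /negbTE ->; rewrite !mulr1 subrKC.
Qed.

Lemma bern_expect_coord2 x y (f g : bool -> R) : x != y ->
  bern_expect (fun b => f (b x) * g (b y)) =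
  (s x * f true + (1 - s x) * f false) * (s y * g true + (1 - s y) * g false).
Proof.
move=> xy; have yx : (y == x) = false by rewrite eq_sym (negbTE xy).
pose phi z bt := if z == x then f bt else if z == y then g bt else 1.
have phi_prod b : \prod_z phi z (b z) = f (b x) * g (b y).
  rewrite (bigD1 x) //= (bigD1 y) 1?eq_sym //= /phi eqxx yx eqxx big1 ?mulr1 //.
  by move=> z /andP[/negbTE -> /negbTE ->].
rewrite -(eq_bern_expect phi_prod) bern_expect_prod (bigD1 x) //= (bigD1 y) 1?eq_sym //=.
rewrite /phi eqxx yx eqxx big1 ?mulr1 //.
by move=> z /andP[/negbTE -> /negbTE ->]; rewrite !mulr1 subrKC.
Qed.

Lemma bern_expect_sqr_sum (f : T -> bool -> R) (A : pred T) :
  (forall x, s x * f x true + (1 - s x) * f x false = 0) ->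
  bern_expect (fun b => (\sum_(x | A x) f x (b x)) ^+ 2) =
  \sum_(x | A x) (s x * f x true ^+ 2 + (1 - s x) * f x false ^+ 2).
Proof.
move=> centred.
have expand b : (\sum_(x | A x) f x (b x)) ^+ 2 =
                \sum_(x | A x) \sum_(y | A y) f x (b x) * f y (b y).
  by rewrite expr2 mulr_suml; apply: eq_bigr => x _; rewrite mulr_sumr.
rewrite (eq_bern_expect expand) bern_expect_sum; apply: eq_bigr => x Ax.
rewrite bern_expect_sum (bigD1 x) //= big1 ?addr0.
  by rewrite (bern_expect_coord x (fun bt => f x bt ^+ 2)) /= !expr2.
move=> y /andP[_ yx]; rewrite (bern_expect_coord2 (f x) (f y)) 1?eq_sym //.
by rewrite centred mul0r.
Qed.

Lemma bern_expect_norm_le_sqrt X :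
  bern_expect (fun b => `|X b|) <= Num.sqrt (bern_expect (fun b => X b ^+ 2)).
Proof.
have E_ge0 : 0 <= bern_expect (fun b => `|X b|) by apply: bern_expect_ge0.
rewrite -[leLHS]ger0_norm // -sqrtr_sqr ler_sqrt; last first.
  by apply: bern_expect_ge0 => b; apply: sqr_ge0.
have := wsum_CauchySchwarz (fun b => `|X b|) bern_prob_ge0.
rewrite bern_prob_sum1 mul1r => /le_trans; apply.
by apply: ler_sum => b _; rewrite real_normK ?num_real.
Qed.


Lemma bern_expect_powR_inv_le X p K : 1 <= p -> (forall b, 0 <= X b) ->
  bern_expect X <= K -> bern_expect (fun b => powR (X b) p^-1) <= powR K p^-1.
Proof.
move=> p_ge1 X_ge0 EX_le; have p_gt0 : 0 < p by apply: lt_le_trans p_ge1.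
have K_ge0 : 0 <= K := le_trans (bern_expect_ge0 X_ge0) EX_le.
have [K_eq0|K_neq0] := eqVneq K 0.
  have EX_eq0 : bern_expect X = 0.
    by apply/le_anti; rewrite -{1}K_eq0 EX_le bern_expect_ge0.
  have term_eq0 b : bern_prob s b * X b = 0.
    by apply: (psumr_eq0P _ EX_eq0) => // b' _; rewrite mulr_ge0 ?bern_prob_ge0.
  rewrite K_eq0 /bern_expect big1 ?powR_ge0 // => b _.
  have /eqP := term_eq0 b; rewrite mulf_eq0 => /orP[/eqP ->|/eqP ->]; first by rewrite mul0r.
  by rewrite powR0 ?mulr0 // invr_neq0 // gt_eqF.
have K_gt0 : 0 < K by rewrite lt_def K_neq0.
pose tangent b := powR K p^-1 * (X b / (p * K) + (1 - p^-1)).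
apply: (le_trans (ler_bern_expect (X := fun b => powR (X b) p^-1) (Y := tangent) _)).
  by move=> b; apply: powR_inv_le_tangent.
rewrite bern_expectZ bern_expectD bern_expect_cst ler_piMr ?powR_ge0 //.
have -> : bern_expect (fun b => X b / (p * K)) = bern_expect X / (p * K).
  by rewrite [RHS]mulrC -bern_expectZ; apply: eq_bern_expect => b; rewrite mulrC.
have : bern_expect X / (p * K) <= p^-1.
  by rewrite ler_pdivrMr ?mulr_gt0 // mulrA mulVf ?gt_eqF // mul1r.
lra.
Qed.
End BernoulliExpectation.

Section BernoulliEstimator.
Variables (R : realType) (T : finType) (s mu : T -> R).
Hypothesis s_gt0_le1 : forall x, 0 < s x <= 1.
Hypothesis mu01 : forall x, mu x = 0 \/ mu x = 1.

Let s_01 x : 0 <= s x <= 1. Proof. by have /andP[/ltW -> ->] := s_gt0_le1 x. Qed.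

Let var_bound_ge0 x : 0 <= (1 - s x) / s x.
Proof. by have /andP[? ?] := s_gt0_le1 x; rewrite divr_ge0 ?subr_ge0 // ltW. Qed.

(* [bern_est s mu b x - mu x] unfolds to [est_err x (b x)]. *)
Definition est_err x (bt : bool) : R := (if mu x != 0 then bt%:R / s x else 0) - mu x.

Lemma est_err_mean x : s x * est_err x true + (1 - s x) * est_err x false = 0.
Proof.
have /andP[s_gt0 _] := s_gt0_le1 x; rewrite /est_err.
case: (mu01 x) => ->; rewrite ?eqxx ?oner_neq0 /=; first by rewrite !subr0 !mulr0 addr0.
by rewrite mul0r; field; rewrite gt_eqF.
Qed.

Lemma est_err_sqr_mean_le x :
  s x * est_err x true ^+ 2 + (1 - s x) * est_err x false ^+ 2 <= (1 - s x) / s x.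
Proof.
have /andP[s_gt0 s_le1] := s_gt0_le1 x; rewrite /est_err.
case: (mu01 x) => ->; rewrite ?eqxx ?oner_neq0 /=.
  by rewrite !subr0 expr0n /= !mulr0 addr0 divr_ge0 ?subr_ge0 // ltW.
rewrite mul0r le_eqVlt; apply/orP; left; apply/eqP; field.
by rewrite gt_eqF.
Qed.

Lemma est_err_abs_mean_le x :
  s x * `|est_err x true| + (1 - s x) * `|est_err x false| <= 2 * (1 - s x).
Proof.
have /andP[s_gt0 s_le1] := s_gt0_le1 x; rewrite /est_err.
case: (mu01 x) => ->; rewrite ?eqxx ?oner_neq0 /=.
  by rewrite !subr0 normr0 !mulr0 addr0 mulr_ge0 ?subr_ge0.
have inv_ge1 : 1 <= 1 / s x by rewrite ler_pdivlMr // mul1r.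
rewrite mul0r sub0r normrN normr1 ger0_norm ?subr_ge0 // mulr1.
rewrite le_eqVlt; apply/orP; left; apply/eqP; field.
by rewrite gt_eqF.
Qed.

Lemma cluster_gap_bern_est F b : cluster_gap F (bern_est s mu b) mu =
  \sum_c `|\sum_(x | F x == c) est_err x (b x)|.
Proof. by apply: eq_bigr => c _; rewrite -cluster_massB. Qed.

Lemma bern_expect_cluster_err_le (F : T -> T) c :
  bern_expect s (fun b => `|\sum_(x | F x == c) est_err x (b x)|) <=
  Num.sqrt (\sum_(x | F x == c) (1 - s x) / s x).
Proof.
apply: (le_trans (bern_expect_norm_le_sqrt s_01 _)).
rewrite ler_sqrt; last exact: sumr_ge0.
rewrite bern_expect_sqr_sum //; last exact: est_err_mean.
by apply: ler_sum => x _; apply: est_err_sqr_mean_le.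
Qed.

Lemma bern_expect_cluster_gap_le (F : T -> T) (Q : {set T}) : (forall x, F x \in Q) ->
  bern_expect s (fun b => cluster_gap F (bern_est s mu b) mu) <=
  Num.sqrt (#|Q|%:R) * Num.sqrt (\sum_x (1 - s x) / s x).
Proof.
move=> FQ; pose V c := \sum_(x | F x == c) (1 - s x) / s x.
have V_ge0 c : 0 <= V c by exact: sumr_ge0.
rewrite (eq_bern_expect s (cluster_gap_bern_est F)) (bern_expect_sum s).
apply: (@le_trans _ _ (\sum_c (c \in Q)%:R * Num.sqrt (V c))).
  apply: ler_sum => c _; have [cQ|cQ] := boolP (c \in Q).
    by rewrite mul1r; apply: bern_expect_cluster_err_le.
  (* the cluster of a [c] outside [Q] is empty *)
  rewrite mul0r le_eqVlt; apply/orP; left; apply/eqP.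
  rewrite -[RHS](bern_expect_cst s 0); apply: eq_bern_expect => b.
  rewrite big_pred0 ?normr0 // => x; apply/negbTE; apply: contra cQ => /eqP <-.
  exact: FQ.
have sum_ind : \sum_c ((c \in Q)%:R : R) = #|Q|%:R.
  rewrite (eq_bigr (fun c => if c \in Q then 1 else 0)) => [|c _]; last by case: (c \in Q).
  by rewrite -big_mkcond sumr_const.
rewrite -sqrtrM ?ler0n // -[leLHS]ger0_norm ?sumr_ge0 // => [|c _]; last first.
  by rewrite mulr_ge0 ?sqrtr_ge0.
rewrite -sqrtr_sqr ler_sqrt ?mulr_ge0 ?ler0n ?sumr_ge0 //.
apply: (le_trans (@wsum_CauchySchwarz _ T (fun c => (c \in Q)%:R) (fun c => Num.sqrt (V c)) _)).
  by move=> c; apply: ler0n.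
rewrite sum_ind ler_wpM2l // -(sum_cluster_mass F (fun x => (1 - s x) / s x)).
apply: ler_sum => c _.
by rewrite sqr_sqrtr //; case: (c \in Q); rewrite ?mul1r ?mul0r.
Qed.

Lemma bern_expect_gap_id_le :
  bern_expect s (fun b => cluster_gap id (bern_est s mu b) mu) <= 2 * \sum_x (1 - s x).
Proof.
rewrite (eq_bern_expect s (cluster_gap_bern_est id)) (bern_expect_sum s) mulr_sumr.
apply: ler_sum => c _.
rewrite (@eq_bern_expect _ _ s _ (fun b => `|est_err c (b c)|)) => [|b]; last first.
  by rewrite big_pred1_eq.
by rewrite (bern_expect_coord s c (fun bt => `|est_err c bt|)) est_err_abs_mean_le.
Qed.
End BernoulliEstimator.

Section CoverHierarchy.
Variables (R : realType) (T : finType) (d : T -> T -> R) (q : R) (L : nat) (x0 : T).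
Hypothesis d_metric : is_metric d.
Hypothesis q_gt1 : 1 < q.

Lemma dist_ge0 x y : 0 <= d x y. Proof. by case: d_metric. Qed.
Lemma dist_xx x : d x x = 0. Proof. by case: d_metric => _ dP _ _; apply/dP. Qed.
Lemma distC x y : d x y = d y x. Proof. by case: d_metric. Qed.
Lemma dist_triangle x y z : d x z <= d x y + d y z. Proof. by case: d_metric. Qed.

Lemma dist_le_diam x y : d x y <= diam d.
Proof. by rewrite /diam (bigD1 x) //= le_max (bigD1 y) //= le_max lexx. Qed.

Lemma diam_ge0 : 0 <= diam d.
Proof. by rewrite -(dist_xx x0) dist_le_diam. Qed.

Definition cover_radius (j : nat) : R := powR q (- j%:R) * diam d.

Lemma cover_radius_ge0 j : 0 <= cover_radius j.
Proof. by rewrite mulr_ge0 ?powR_ge0 ?diam_ge0. Qed.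

Lemma powR_q1B (x : R) : powR q (1 - x) = q * powR q (- x).
Proof.
have q_gt0 : 0 < q := lt_trans ltr01 q_gt1.
rewrite powRD ?powRr1 ?(ltW q_gt0) //.
by apply/implyP => _; rewrite gt_eqF.
Qed.

Lemma hqL_recr j : hqL d q L j = cover_radius j + hqL d q L j.+1.
Proof.
rewrite /hqL /cover_radius.
have -> : 1 - (j.+1)%:R = - (j%:R) :> R by rewrite -natr1; ring.
rewrite powR_q1B; field.
by rewrite subr_eq0 gt_eqF.
Qed.

Lemma hqL_top : hqL d q L L.+1 = 0.
Proof.
rewrite /hqL; have -> : 1 - (L.+1)%:R = - (L%:R) :> R by rewrite -natr1; ring.
by rewrite subrr !mul0r.
Qed.

Lemma hqL_ge0 j : (j <= L.+1)%N -> 0 <= hqL d q L j.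
Proof.
move=> le_jL; rewrite /hqL mulr_ge0 ?diam_ge0 // divr_ge0 ?subr_ge0 ?(ltW q_gt1) //.
rewrite ler_powR ?(ltW q_gt1) //.
have : (j%:R <= L.+1%:R :> R) by rewrite ler_nat.
by rewrite -natr1; lra.
Qed.

Lemma hqL_le j : hqL d q L j <= q / (q - 1) * powR q (- j%:R) * diam d.
Proof.
rewrite /hqL powR_q1B ler_wpM2r ?diam_ge0 //.
by rewrite mulrAC ler_pM2r ?invr_gt0 ?subr_gt0 // gerBl powR_ge0.
Qed.

Lemma cover_num_spec r : 0 <= r -> exists Q, is_cover d r Q && (#|Q| <= cover_num d r)%N.
Proof.
move=> r_ge0; rewrite /cover_num.
apply: (big_ind (fun v => exists Q, is_cover d r Q && (#|Q| <= v)%N)).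
- exists [set: T]%SET; rewrite cardsT leqnn andbT.
  by apply/forallP => x; apply/existsP; exists x; rewrite finset.in_setT dist_xx.
- move=> v1 v2 [Q1 /andP[cov1 le1]] [Q2 /andP[cov2 le2]].
  by case: (leqP v1 v2) => _; [exists Q1; rewrite cov1 | exists Q2; rewrite cov2].
- by move=> Q cov; exists Q; rewrite cov leqnn.
Qed.

Definition level_cover (j : nat) : {set T} :=
  odflt [set: T]%SET
    [pick Q : {set T} | is_cover d (cover_radius j) Q && (#|Q| <= Qcard d q j)%N].

Lemma level_cover_spec j :
  is_cover d (cover_radius j) (level_cover j) && (#|level_cover j| <= Qcard d q j)%N.
Proof.
rewrite /level_cover; case: pickP => [Q //|no_cover].
have [Q cov] := cover_num_spec (cover_radius_ge0 j).
by move: (no_cover Q); rewrite /Qcard -/(cover_radius j) cov.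
Qed.

(* Level 0 is the one-point cover [x0]: its radius [diam d] covers everything. *)
Definition cover_proj (j : nat) (y : T) : T :=
  if j == 0%N then x0 else odflt y [pick z in level_cover j | d y z <= cover_radius j].

Lemma cover_proj_spec j y :
  d y (cover_proj j y) <= cover_radius j /\ ((0 < j)%N -> cover_proj j y \in level_cover j).
Proof.
rewrite /cover_proj; case: eqP => [->|/eqP j_neq0].
  by split => //; rewrite /cover_radius oppr0 powRr0 mul1r dist_le_diam.
case: pickP => [z /andP[zQ dz] //|no_center].
have /andP[/forallP /(_ y) /existsP [z /andP[zQ dz]] _] := level_cover_spec j.
by move: (no_center z); rewrite zQ dz.
Qed.

Fixpoint descend (k : nat) : T -> T :=
  if k is k'.+1 then fun x => cover_proj (L - k') (descend k' x) else id.

(* [level_map j x] is the level-[j] ancestor of [x]: starting from level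
   [L + 1] (the points themselves), project successively on the covers of
   levels [L, L - 1, ..., j]. *)
Definition level_map (j : nat) : T -> T := descend (L.+1 - j).

Lemma level_map_top x : level_map L.+1 x = x.
Proof. by rewrite /level_map subnn. Qed.

Lemma level_mapS j x : (j <= L)%N -> level_map j x = cover_proj j (level_map j.+1 x).
Proof.
by move=> le_jL; rewrite /level_map subSn //= subKn.
Qed.

Lemma level_map0 x : level_map 0 x = x0.
Proof. by rewrite level_mapS. Qed.

Lemma level_map_in_cover j x : (0 < j)%N -> (j <= L)%N -> level_map j x \in level_cover j.
Proof.
by move=> j_gt0 le_jL; rewrite level_mapS //; case: (cover_proj_spec j (level_map j.+1 x)) => _ ->.
Qed.

Lemma level_map_refine j x y : (j < L.+1)%N ->
  level_map j.+1 x = level_map j.+1 y -> level_map j x = level_map j y.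
Proof. by move=> lt_jL e; rewrite (level_mapS x) // (level_mapS y) // e. Qed.

Lemma level_map_dist j x : (j <= L.+1)%N -> d x (level_map j x) <= hqL d q L j.
Proof.
move=> le_jL; rewrite -(subKn le_jL).
elim: (L.+1 - j)%N (leq_subr j L.+1) => [|k IHk lt_kL].
  by rewrite subn0 level_map_top dist_xx hqL_top.
have e : (L.+1 - k = (L.+1 - k.+1).+1)%N by lia.
rewrite level_mapS; last by lia.
rewrite hqL_recr -e.
apply: (le_trans (dist_triangle x (level_map (L.+1 - k) x) _)); rewrite addrC lerD //.
  by rewrite e; case: (cover_proj_spec (L.+1 - k.+1) (level_map (L.+1 - k.+1).+1 x)).
exact: IHk (ltnW lt_kL).
Qed.

Lemma level_map_diam j x y : (j <= L.+1)%N ->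
  level_map j x = level_map j y -> d x y <= 2 * hqL d q L j.
Proof.
move=> le_jL e; apply: (le_trans (dist_triangle x (level_map j x) y)).
rewrite {2}e (distC _ y); have := level_map_dist x le_jL; have := level_map_dist y le_jL.
lra.
Qed.
End CoverHierarchy.

Section ExpectedKRBound.
Variables (R : realType) (T : finType) (d : T -> T -> R) (q : R) (L : nat) (x0 : T).
Variables (mu s : T -> R) (p C : R).
Hypothesis d_metric : is_metric d.
Hypothesis q_gt1 : 1 < q.
Hypothesis mu01 : forall x, mu x = 0 \/ mu x = 1.
Hypothesis s_gt0_le1 : forall x, 0 < s x <= 1.
Hypothesis p_ge1 : 1 <= p.
Hypothesis C_gt0 : 0 < C.

Let p_gt0 : 0 < p := lt_le_trans ltr01 p_ge1.
Let s_01 x : 0 <= s x <= 1. Proof. by have /andP[/ltW -> ->] := s_gt0_le1 x. Qed.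
Let mu_ge0 x : 0 <= mu x. Proof. by case: (mu01 x) => ->. Qed.
Local Notation est b := (bern_est s mu b).
Local Notation F := (level_map d q L x0).
Local Notation V := (\sum_x (1 - s x) / s x).
Local Notation gap j b := (cluster_gap (F j) (est b) mu).

Let diam_d_ge0 : 0 <= diam d := diam_ge0 x0 d_metric.

Let V_ge0 : 0 <= V.
Proof.
by apply: sumr_ge0 => x _; have /andP[? ?] := s_gt0_le1 x; rewrite divr_ge0 ?subr_ge0 // ltW.
Qed.

Lemma bern_est_ge0 b x : 0 <= est b x.
Proof.
by rewrite /bern_est; case: ifP => // _; have /andP[? _] := s_gt0_le1 x; rewrite divr_ge0 // ltW.
Qed.

Lemma expected_KR_le_of_plans (X : {ffun T -> bool} -> R) K :
  bern_expect s X <= K ->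
  (forall b, exists2 pi, subcoupling (est b) mu pi & KR_cost d p C (est b) mu pi <= X b) ->
  expected_KR d p C s mu <= powR K p^-1.
Proof.
move=> EX_le plans.
have X_ge0 b : 0 <= X b.
  have [pi spi cost_le] := plans b.
  by apply: le_trans cost_le; apply: KR_cost_ge0 => //; apply: ltW.
apply: le_trans (bern_expect_powR_inv_le s_01 p_ge1 X_ge0 EX_le).
apply: (ler_bern_expect s_01) => b; have [pi spi cost_le] := plans b.
apply: (le_trans (KR_le_cost d p_gt0 (ltW C_gt0) spi)).
by apply: ge0_ler_powR; rewrite ?nnegrE ?invr_ge0 ?(ltW p_gt0) ?KR_cost_ge0 ?(ltW C_gt0).
Qed.

Lemma expected_KR_le_diagonal :
  expected_KR d p C s mu <= powR (powR C p / 2) p^-1 * powR (2 * \sum_x (1 - s x)) p^-1.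
Proof.
have mass_ge0 : 0 <= \sum_x (1 - s x).
  by apply: sumr_ge0 => x _; have /andP[_] := s_gt0_le1 x; rewrite subr_ge0.
rewrite -powRM ?divr_ge0 ?powR_ge0 ?mulr_ge0 //.
apply: (@expected_KR_le_of_plans (fun b => powR C p / 2 * cluster_gap id (est b) mu)).
  by rewrite bern_expectZ ler_wpM2l ?divr_ge0 ?powR_ge0 ?bern_expect_gap_id_le.
move=> b; have [pi piD] := diagonal_cluster_plan p_gt0 (dist_xx d_metric) (bern_est_ge0 b) mu_ge0.
exists pi; first by case: piD.
apply: (le_trans (KR_cost_cluster_plan C piD)).
by rewrite add0r mulrA mulrAC.
Qed.

Definition level_weight j : R := powR (2 * hqL d q L j) p.

Let level_weight_ge0 j : 0 <= level_weight j. Proof. exact: powR_ge0. Qed.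

(* The cost of the plan of [chain_cluster_plan] from level [m] up, summed by
   parts; the mass still unmatched at level [m] is paid for at the price [C ^ p]. *)
Definition chain_bound m b : R :=
  \sum_(m <= j < L.+1) level_weight j / 2 * gap j.+1 b
  + (powR C p / 2 - level_weight m / 2) * gap m b.

Lemma KR_cost_le_chain_bound m b : (m <= L)%N ->
  exists2 pi, subcoupling (est b) mu pi & KR_cost d p C (est b) mu pi <= chain_bound m b.
Proof.
move=> le_mL.
have w_bound j x y : (j < L.+1)%N -> F j x = F j y -> powR (d x y) p <= level_weight j.
  move=> lt_jL e; have diam_le := level_map_diam d_metric q_gt1 (ltnW lt_jL) e.
  apply: ge0_ler_powR; rewrite ?nnegrE ?(ltW p_gt0) ?(dist_ge0 d_metric) //.
  exact: le_trans (dist_ge0 d_metric x y) diam_le.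
have [pi piF] := chain_cluster_plan p_gt0 (dist_xx d_metric) (bern_est_ge0 b) mu_ge0
  (level_map_top d q L x0) (@level_map_refine _ _ d q L x0)
  w_bound level_weight_ge0 (leqW le_mL).
exists pi; first by case: piF.
apply: (le_trans (KR_cost_cluster_plan C piF)).
have := @sumr_weighted_increments_le _ level_weight (fun j => gap j b)
  m L.+1 le_mL level_weight_ge0 (fun j => sumr_ge0 _ (fun c _ => normr_ge0 _)).
rewrite /chain_bound; lra.
Qed.

Lemma bern_expect_gap_top_le :
  bern_expect s (fun b => gap L.+1 b) <= Num.sqrt (#|T|%:R) * Num.sqrt V.
Proof.
rewrite -cardsT; apply: (bern_expect_cluster_gap_le s_gt0_le1 mu01) => x.
exact: finset.in_setT.
Qed.

Lemma bern_expect_gap_level_le j : (0 < j <= L)%N ->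
  bern_expect s (fun b => gap j b) <= Num.sqrt ((Qcard d q j)%:R) * Num.sqrt V.
Proof.
case/andP=> j_gt0 le_jL.
have in_cover x : F j x \in level_cover d q j by apply: level_map_in_cover.
apply: (le_trans (bern_expect_cluster_gap_le s_gt0_le1 mu01 in_cover)).
rewrite ler_wpM2r ?sqrtr_ge0 // ler_sqrt ?ler0n // ler_nat.
by case/andP: (level_cover_spec q x0 d_metric j).
Qed.

Lemma bern_expect_gap_root_le : bern_expect s (fun b => gap 0%N b) <= Num.sqrt V.
Proof.
have root x : F 0%N x \in [set x0]%SET by rewrite level_map0 set11.
by have := bern_expect_cluster_gap_le s_gt0_le1 mu01 root; rewrite cards1 sqrtr1 mul1r.
Qed.

Definition level_coef i : R := powR (diam d) p * powR 2 (p - 1) *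
  (powR (q / (q - 1)) p * powR q (p - i%:R * p)).

Lemma level_weight_half_le j : (j <= L)%N -> level_weight j / 2 <= level_coef j.+1.
Proof.
move=> le_jL; have h_ge0 := hqL_ge0 x0 d_metric q_gt1 (leqW le_jL).
have qq_ge0 : 0 <= q / (q - 1).
  by rewrite divr_ge0 ?subr_ge0 ?(ltW q_gt1) // ltW // (lt_trans ltr01 q_gt1).
rewrite /level_weight powR_double_half //.
have -> : level_coef j.+1 = powR 2 (p - 1) * powR (q / (q - 1) * powR q (- j%:R) * diam d) p.
  rewrite /level_coef [in RHS]powRM ?(mulr_ge0 qq_ge0) ?powR_ge0 //.
  rewrite [in RHS]powRM ?powR_ge0 // -powRrM.
  have -> : - j%:R * p = p - j.+1%:R * p by rewrite -natr1; ring.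
  by ring.
apply: ler_wpM2l; first exact: powR_ge0.
by rewrite ge0_ler_powR ?nnegrE ?(ltW p_gt0) ?(mulr_ge0 (mulr_ge0 qq_ge0 _)) ?powR_ge0 ?hqL_le.
Qed.

Lemma level_weight_half_L :
  level_weight L / 2 = powR (diam d) p * powR 2 (p - 1) * powR q (- L%:R * p).
Proof.
rewrite /level_weight powR_double_half ?hqL_ge0 // hqL_recr // hqL_top addr0.
by rewrite /cover_radius powRM ?powR_ge0 // -powRrM; ring.
Qed.

Lemma Aconst_split l : Aconst d q p L l = level_weight L / 2 * Num.sqrt (#|T|%:R) +
  \sum_(l <= i < L.+1) level_coef i * Num.sqrt ((Qcard d q i)%:R).
Proof.
rewrite /Aconst level_weight_half_L mulrDr; congr (_ + _); first by ring.
by rewrite !mulr_sumr; apply: eq_bigr => i _; rewrite /level_coef; ring.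
Qed.

Lemma Aconst_recr l : (l <= L)%N ->
  Aconst d q p L l = level_coef l * Num.sqrt ((Qcard d q l)%:R) + Aconst d q p L l.+1.
Proof. by move=> le_lL; rewrite !Aconst_split big_ltn // addrCA. Qed.

Lemma Aconst_ge0 l : 0 <= Aconst d q p L l.
Proof.
rewrite Aconst_split addr_ge0 ?mulr_ge0 ?divr_ge0 ?sqrtr_ge0 ?level_weight_ge0 ?invr_ge0 //.
by apply: sumr_ge0 => i _; rewrite /level_coef !mulr_ge0 ?powR_ge0 ?sqrtr_ge0.
Qed.

Lemma bern_expect_chain_bound_le m : (m <= L)%N ->
  bern_expect s (chain_bound m) <= Aconst d q p L m.+1 * Num.sqrt V +
    (powR C p / 2 - level_weight m / 2) * bern_expect s (fun b => gap m b).
Proof.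
move=> le_mL; rewrite /chain_bound bern_expectD !bern_expectZ (bern_expect_sum s) lerD2r.
under eq_bigr do rewrite bern_expectZ.
rewrite Aconst_split big_nat_recr //= mulrDl addrC lerD //.
  by rewrite -[X in _ <= X]mulrA; apply: ler_wpM2l; rewrite ?divr_ge0 ?bern_expect_gap_top_le.
rewrite big_add1 /= mulr_suml; apply: ler_sum_nat => j /andP[le_mj lt_jL].
rewrite -[X in _ <= X]mulrA ler_pM ?divr_ge0 ?level_weight_half_le ?bern_expect_gap_level_le //.
  by apply: bern_expect_ge0 => // b; apply: sumr_ge0 => c _; apply: normr_ge0.
exact: ltnW.
Qed.

Lemma expected_KR_le_large_C : 2 * hqL d q L 0 <= C ->
  expected_KR d p C s mu <=
  powR ((powR C p / 2 - powR 2 (p - 1) * powR (hqL d q L 0) p) + Aconst d q p L 1) p^-1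
  * powR V (2 * p)^-1.
Proof.
move=> h0_le; have h0_ge0 := hqL_ge0 x0 d_metric q_gt1 (leq0n L.+1).
have w0 : level_weight 0 / 2 = powR 2 (p - 1) * powR (hqL d q L 0) p.
  exact: powR_double_half.
have coef_ge0 : 0 <= powR C p / 2 - level_weight 0 / 2.
  have h2_ge0 : 0 <= 2 * hqL d q L 0 by apply: mulr_ge0.
  rewrite subr_ge0 ler_pM2r ?invr_gt0 ?ltr0n //.
  by apply: ge0_ler_powR; rewrite ?nnegrE ?(ltW p_gt0) ?(ltW C_gt0).
rewrite -w0 -powR_mul_sqrt ?(addr_ge0 coef_ge0) ?Aconst_ge0 //.
apply: (expected_KR_le_of_plans (X := chain_bound 0)); last first.
  by move=> b; apply: KR_cost_le_chain_bound.
apply: (le_trans (bern_expect_chain_bound_le (leq0n L))).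
rewrite [X in _ <= X]mulrDl [X in _ <= X]addrC lerD2l.
by apply: ler_wpM2l => //; apply: bern_expect_gap_root_le.
Qed.

Lemma expected_KR_le_mid_C : 2 * hqL d q L L < C -> C < 2 * hqL d q L 0 ->
  expected_KR d p C s mu <=
  powR (\sum_(1 <= l < L.+1 | (2 * hqL d q L l <= C) && (C < 2 * hqL d q L l.-1))
          Aconst d q p L l) p^-1 * powR V (2 * p)^-1.
Proof.
move=> hL_lt h0_gt.
have [l /andP[l_gt0 le_lL] /andP[hl_le hl_gt]] :=
  exists_crossing (f := fun l => 2 * hqL d q L l) (ltW hL_lt) h0_gt.
set E := \sum_(_ <= _ < _ | _) _.
have A_le_E : Aconst d q p L l <= E.
  by apply: ler_sum_nat_term; rewrite ?l_gt0 ?ltnS ?hl_le ?hl_gt //; apply: Aconst_ge0.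
rewrite -powR_mul_sqrt //; last exact: le_trans (Aconst_ge0 l) A_le_E.
apply: (expected_KR_le_of_plans (X := chain_bound l)); last first.
  by move=> b; apply: KR_cost_le_chain_bound.
apply: (le_trans (bern_expect_chain_bound_le le_lL)).
apply: (le_trans _ (ler_wpM2r (sqrtr_ge0 V) A_le_E)).
rewrite (Aconst_recr le_lL) [X in _ <= X]mulrDl [X in _ <= X]addrC lerD2l.
rewrite -[X in _ <= X]mulrA.
have hl_ge0 : 0 <= 2 * hqL d q L l.
  by rewrite mulr_ge0 // (hqL_ge0 x0 d_metric q_gt1) // leqW.
have Cp_le : powR C p / 2 <= level_coef l.
  have le_l1L : (l.-1 <= L)%N by apply: leq_trans (leq_pred l) le_lL.
  have := level_weight_half_le le_l1L; rewrite prednK // => /(le_trans _); apply.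
  rewrite ler_pM2r ?invr_gt0 ?ltr0n //.
  apply: ge0_ler_powR; rewrite ?nnegrE ?(ltW p_gt0) ?(ltW C_gt0) ?(ltW hl_gt) //.
  exact: ltW (lt_trans C_gt0 hl_gt).
apply: ler_pM (bern_expect_gap_level_le _); rewrite ?l_gt0 ?le_lL //.
- rewrite subr_ge0 ler_pM2r ?invr_gt0 ?ltr0n //.
  by apply: ge0_ler_powR; rewrite ?nnegrE ?(ltW p_gt0) ?(ltW C_gt0).
- by apply: bern_expect_ge0 => // b; apply: sumr_ge0 => c _; apply: normr_ge0.
- by apply: le_trans Cp_le; rewrite gerBl divr_ge0 ?level_weight_ge0.
Qed.
End ExpectedKRBound.

Theorem theoremB2 (R : realType) (T : finType) (d : T -> T -> R)
  (mu s : T -> R) (p C q : R) (L : nat) :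
  is_metric d -> (1 < #|T|)%N ->
  (forall x, mu x = 0 \/ mu x = 1) ->
  (forall x, 0 < s x <= 1) ->
  1 <= p -> 0 < C -> 1 < q ->
  expected_KR d p C s mu <=
  powR (Econst d p C q L) p^-1 *
  (if C <= Num.max (2 * hqL d q L L) (min_dist d)
   then powR (2 * \sum_(x : T) (1 - s x)) p^-1
   else powR (\sum_(x : T) (1 - s x) / s x) (2 * p)^-1).
Proof.
move=> d_metric T_gt1 mu01 s_gt0_le1 p_ge1 C_gt0 q_gt1.
have [x0 _] := card_gt0P (ltnW T_gt1).
rewrite /Econst; case: ifP => [_|/negbT]; first exact: expected_KR_le_diagonal.
rewrite -ltNge gt_max => /andP[hL_lt _].
case: ifP => [h0_le|/negbT]; first exact: expected_KR_le_large_C.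
by rewrite -ltNge => h0_gt; apply: expected_KR_le_mid_C.
Qed.
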